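(* Let $n,k_1,k_2\in\mathbb N$ with $k_1+k_2<n$. Every Side-By-Side percentile mechanism, i.e. every percentile mechanism $\mathcal{PM}_{\vec v}$, $\vec v\in[0,1]^2$, that places the facility of capacity $k_1$ at $x_i$ and the facility of capacity $k_2$ at $x_{i+1}$ for some $i\in\{1,\dots,n-1\}$ (in sorted order), is Equilibrium Stable.
   Context: There are $n$ agents with positions $\vec x\in[0,1]^n$ and two facilities with capacities $k_1,k_2$; a location $\vec y=(y_1,y_2)$ places the facility of capacity $k_j$ at $y_j$. A fixed priority order breaks ties. FCFS game induced by $(\vec x,\vec y)$: each agent $i$ chooses $s_i\in\{1,2\}$; $\mathcal S_j$ = agents choosing $j$; $T_j\subseteq\mathcal S_j$ = the $\min(k_j,|\mathcal S_j|)$ agents of $\mathcal S_j$ closest to $y_j$ (ties by priority); utility $u_i=1-|x_i-y_j|$ if $i\in T_j$, else $0$. $NE(\vec x,\vec y)$ = set of pure Nash equilibria; $SW_\gamma=\sum_iu_i$. A mechanism $M:[0,1]^n\to\mathbb R^2$ is absolutely truthful if for every $i,\vec x,x_i'\in[0,1],\vec s_{-i}$: $\max_{s_i}u_i(\vec x,M(\vec x);s_i,\vec s_{-i})\ge\max_{s_i'}u_i(\vec x,M(x_i',\vec x_{-i});s_i',\vec s_{-i})$; it is Equilibrium Stable (ES) if it is absolutely truthful and for every $\vec x$ all $\gamma\in NE(\vec x,M(\vec x))$ give the same $SW_\gamma(\vec x,M(\vec x))$. Percentile mechanism $\mathcal{PM}_{\vec v}$: sort reports $x_1\le\dots\le x_n$,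 set $y_j=x_{\lfloor(n-1)v_j\rfloor+1}$. *)

From mathcomp Require Import all_boot all_order all_algebra perm.
From mathcomp Require Import reals.
Set Implicit Arguments. Unset Strict Implicit. Unset Printing Implicit Defensive.
Import Order.TTheory GRing.Theory Num.Theory.
Local Open Scope ring_scope.

Section FCFS.
Variables (R : realFieldType) (n : nat).

Definition cap (k1 k2 : nat) (j : 'I_2) : nat := if j == ord0 then k1 else k2.
Definition loc (y : R * R) (j : 'I_2) : R := if j == ord0 then y.1 else y.2.

Definition upd {T : Type} (f : 'I_n -> T) (i : 'I_n) (a : T) : 'I_n -> T :=
  fun l => if l == i then a else f l.

(* agent l precedes agent i for facility j (closer to y_j; ties broken by
   the fixed priority order prio, smaller value = higher priority) *)
Definition precedes (prio : {perm 'I_n}) (x : 'I_n -> R) (yj : R) (l i : 'I_n) : bool :=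
  (`|x l - yj| < `|x i - yj|) ||
  ((`|x l - yj| == `|x i - yj|) && (prio l < prio i)%N).

(* T_j : agents choosing j that are among the min(k_j,|S_j|) closest to y_j *)
Definition served (k1 k2 : nat) (prio : {perm 'I_n}) (x : 'I_n -> R) (y : R * R)
    (s : 'I_n -> 'I_2) (j : 'I_2) : {set 'I_n} :=
  [set i | (s i == j) &&
     (#|[set l | (s l == j) && precedes prio x (loc y j) l i]| < cap k1 k2 j)%N].

Definition util (k1 k2 : nat) (prio : {perm 'I_n}) (x : 'I_n -> R) (y : R * R)
    (s : 'I_n -> 'I_2) (i : 'I_n) : R :=
  if i \in served k1 k2 prio x y s (s i) then 1 - `|x i - loc y (s i)| else 0.

Definition best_util (k1 k2 : nat) (prio : {perm 'I_n}) (x : 'I_n -> R) (y : R * R)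
    (s : 'I_n -> 'I_2) (i : 'I_n) : R :=
  Num.max (util k1 k2 prio x y (upd s i ord0) i) (util k1 k2 prio x y (upd s i (@Ordinal 2 1 isT)) i).

Definition is_NE (k1 k2 : nat) (prio : {perm 'I_n}) (x : 'I_n -> R) (y : R * R)
    (s : 'I_n -> 'I_2) : Prop :=
  forall (i : 'I_n) (a : 'I_2),
    util k1 k2 prio x y (upd s i a) i <= util k1 k2 prio x y s i.

Definition SW (k1 k2 : nat) (prio : {perm 'I_n}) (x : 'I_n -> R) (y : R * R)
    (s : 'I_n -> 'I_2) : R :=
  \sum_(i < n) util k1 k2 prio x y s i.

Definition in01 (t : R) : bool := (0 <= t) && (t <= 1).

Definition absolutely_truthful (k1 k2 : nat) (prio : {perm 'I_n})
    (M : ('I_n -> R) -> R * R) : Prop :=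
  forall (i : 'I_n) (x : 'I_n -> R) (xi' : R) (s : 'I_n -> 'I_2),
    (forall l, in01 (x l)) -> in01 xi' ->
    best_util k1 k2 prio x (M (upd x i xi')) s i <= best_util k1 k2 prio x (M x) s i.

Definition equilibrium_stable (k1 k2 : nat) (prio : {perm 'I_n})
    (M : ('I_n -> R) -> R * R) : Prop :=
  absolutely_truthful k1 k2 prio M /\
  forall (x : 'I_n -> R), (forall l, in01 (x l)) ->
    forall s s' : 'I_n -> 'I_2,
      is_NE k1 k2 prio x (M x) s -> is_NE k1 k2 prio x (M x) s' ->
      SW k1 k2 prio x (M x) s = SW k1 k2 prio x (M x) s'.

End FCFS.

Section PM.
Variables (R : archiRealFieldType) (n : nat).

(* reports sorted nondecreasingly; (sorted_reports x)`_m is x_{m+1} in the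
   paper's 1-indexed notation *)
Definition sorted_reports (x : 'I_n -> R) : seq R :=
  sort <=%R [seq x i | i <- enum 'I_n].

Definition pidx (v : R) : nat := `|Num.floor ((n.-1)%:R * v)|%N.

(* percentile mechanism PM_v : y_j = x_{floor((n-1) v_j) + 1} *)
Definition PM (v : R * R) (x : 'I_n -> R) : R * R :=
  ((sorted_reports x)`_(pidx v.1), (sorted_reports x)`_(pidx v.2)).

End PM.

(* Truthfulness: moving one's own report can only push an order statistic away
   from one's true position, so every facility gets farther and every agent who
   had priority over us at a facility keeps it; hence no choice of facility pays
   more after misreporting.  Stability: the facilities sit at adjacent order
   statistics, so no report lies strictly between them and no agent is
   equidistant from two distinct facilities.  Then every agent gets the same
   utility in all equilibria.  If agent a loses from s to s', its facility is
   full in s' because of some b who did not choose it in s; b is then strictly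
   better off in s and strictly closer to its s-facility than a, so a loser
   closest to its facility cannot exist.  If both facilities coincide, the
   agents ahead of a loser fill all k1 + k2 places in s' but not in s. *)

From mathcomp Require Import all_boot all_order all_algebra perm.
From mathcomp Require Import reals.
From mathcomp Require Import lra.
Set Implicit Arguments. Unset Strict Implicit. Unset Printing Implicit Defensive.
Import Order.TTheory GRing.Theory Num.Theory.
Local Open Scope ring_scope.

Section Precedence.
Variables (R : realFieldType) (n : nat) (prio : {perm 'I_n}) (x : 'I_n -> R) (t : R).
Local Notation prec := (precedes prio x t).

Lemma precedes_irr l : prec l l = false.
Proof. by rewrite /precedes ltxx eqxx ltnn. Qed.

Lemma precedes_trans l m p : prec l m -> prec m p -> prec l p.
Proof.
rewrite /precedes => /orP[h1|/andP[/eqP e1 h1]] /orP[h2|/andP[/eqP e2 h2]].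
- by rewrite (lt_trans h1 h2).
- by rewrite -e2 h1.
- by rewrite e1 h2.
- by rewrite e1 e2 eqxx (ltn_trans h1 h2) orbT.
Qed.

Lemma precedes_total l m : l != m -> prec l m || prec m l.
Proof.
move=> lm; rewrite /precedes; case: ltgtP => //= _.
have : prio l != prio m by apply: contra lm => /eqP/perm_inj ->.
by rewrite neq_ltn => /orP[->|->]; rewrite ?orbT.
Qed.

Lemma precedes_dist_le l m : prec l m -> `|x l - t| <= `|x m - t|.
Proof. by rewrite /precedes => /orP[/ltW //|/andP[/eqP -> _]]. Qed.

Definition prec_rank l := #|[set m | prec m l]|.

Lemma prec_rank_lt l m : prec l m -> (prec_rank l < prec_rank m)%N.
Proof.
move=> lm; apply: proper_card; apply/properP; split.
  by apply/subsetP => p; rewrite !inE => /precedes_trans; apply.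
by exists l; rewrite !inE ?precedes_irr.
Qed.

End Precedence.

Lemma loc_dist_tie (R : realFieldType) (y : R * R) (p : R) (j j' : 'I_2) :
  j != j' -> `|p - loc y j| = `|p - loc y j'| -> `|p - y.1| = `|p - y.2|.
Proof. by case: j j' => [[|[|//]] ?] [[|[|//]] ?]. Qed.

Lemma I2_neq0 (j : 'I_2) : (j != ord0) = (j == ord_max).
Proof. by case: j => [[|[|//]] ?]. Qed.

Section Game.
Variables (R : realFieldType) (n k1 k2 : nat) (prio : {perm 'I_n}).
Variables (x : 'I_n -> R) (y : R * R).
Local Notation u := (util k1 k2 prio x y).
Local Notation cap := (cap k1 k2).
Local Notation NE := (is_NE k1 k2 prio x y).

Definition payoff c j := 1 - `|x c - loc y j|.

Definition ahead (s : 'I_n -> 'I_2) j c :=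
  #|[set l | (s l == j) && precedes prio x (loc y j) l c]|.

Lemma utilE s c :
  u s c = if (ahead s (s c) c < cap (s c))%N then payoff c (s c) else 0.
Proof. by rewrite /util /served inE eqxx. Qed.

Lemma util_upd s c j :
  u (upd s c j) c = if (ahead s j c < cap j)%N then payoff c j else 0.
Proof.
have ahead_upd : ahead (upd s c j) j c = ahead s j c.
  apply: eq_card => l; rewrite !inE /upd.
  by case: (eqVneq l c) => [->|//]; rewrite precedes_irr !andbF.
rewrite utilE; have -> : upd s c j c = j by rewrite /upd eqxx.
by rewrite ahead_upd.
Qed.

Lemma NE_deviation_le s c j : NE s ->
  (if (ahead s j c < cap j)%N then payoff c j else 0) <= u s c.
Proof. by move=> hs; rewrite -util_upd; exact: hs. Qed.

Lemma card_admitted_le s j (X : {set 'I_n}) :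
  (forall l, l \in X -> s l = j /\ (ahead s j l < cap j)%N) -> (#|X| <= cap j)%N.
Proof.
move=> hX; have [->|[l0 l0X]] := set_0Vmem X; first by rewrite cards0.
case: (arg_maxnP (prec_rank prio x (loc y j)) l0X) => m mX mmax.
have {}mX : m \in X by [].
have {}mmax l : l \in X ->
    (prec_rank prio x (loc y j) l <= prec_rank prio x (loc y j) m)%N.
  exact: mmax.
have [_ ahead_m] := hX m mX.
rewrite (cardsD1 m) mX add1n; apply: leq_ltn_trans ahead_m.
apply: subset_leq_card; apply/subsetP => l; rewrite !inE => /andP[lm lX].
rewrite (hX l lX).1 eqxx /=.
case/orP: (precedes_total prio x (loc y j) lm) => // /prec_rank_lt.
by rewrite ltnNge (mmax l lX).
Qed.

Hypothesis payoff_ge0 : forall c j, 0 <= payoff c j.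

Lemma util_ge0 s c : 0 <= u s c.
Proof. by rewrite utilE; case: ifP. Qed.

Lemma util_served s c : 0 < u s c ->
  (ahead s (s c) c < cap (s c))%N /\ u s c = payoff c (s c).
Proof. by rewrite utilE; case: ifP => //; rewrite ltxx. Qed.

Lemma NE_full s c j : NE s -> u s c < payoff c j -> (cap j <= ahead s j c)%N.
Proof.
move=> hs hlt; rewrite leqNgt; apply/negP => hfree.
by move: (@NE_deviation_le s c j hs); rewrite hfree leNgt hlt.
Qed.

Lemma NE_loss_displacer s s' a : NE s -> NE s' -> u s' a < u s a ->
  exists b, [/\ s b != s a, precedes prio x (loc y (s a)) b a,
     u s' b = payoff b (s a) & payoff b (s a) <= u s b].
Proof.
move=> hs hs' loss; set j := s a; set t := loc y j.
have [ahead_a ua] := util_served (le_lt_trans (util_ge0 s' a) loss).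
have full_a : (cap j <= ahead s' j a)%N by apply: NE_full hs' _; rewrite -ua.
pose A := [set l | (s l == j) && precedes prio x t l a].
pose A' := [set l | (s' l == j) && precedes prio x t l a].
have [b0 b0new] : exists b0, b0 \in A' :\: A.
  apply/set0Pn; rewrite setD_eq0; apply: contraTN isT => /subset_leq_card.
  by rewrite leqNgt (leq_trans ahead_a full_a).
case: (arg_minnP (prec_rank prio x t) b0new) => b bnew bmin.
have {}bmin l : l \in A' :\: A -> (prec_rank prio x t b <= prec_rank prio x t l)%N.
  exact: bmin.
have {}bnew : b \in A' :\: A by [].
move: bnew; rewrite !inE negb_and => /andP[bA /andP[/eqP s'b ba]].
have sb : s b != j by case/orP: bA => //; rewrite ba.
have ahead_b_lt (r : 'I_n -> 'I_2) :
    (forall l, r l = j -> precedes prio x t l b -> l \in A) -> (ahead r j b < cap j)%N.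
  move=> rA; apply: leq_ltn_trans ahead_a; apply: subset_leq_card.
  by apply/subsetP => l; rewrite inE => /andP[/eqP rl lb]; apply: rA.
have lA l : s l = j -> precedes prio x t l b -> l \in A.
  by move=> sl lb; rewrite inE sl eqxx (precedes_trans lb ba).
exists b; split => //.
- rewrite utilE s'b ahead_b_lt // => l s'l lb.
  apply: contraT => lA'; have := bmin l.
  rewrite in_setD lA' inE s'l eqxx (precedes_trans lb ba) => /(_ isT).
  by rewrite leqNgt prec_rank_lt.
- by have := @NE_deviation_le s b j hs; rewrite (ahead_b_lt _ lA).
Qed.

Lemma NE_util_le_no_tie s s' : NE s -> NE s' ->
  (forall c, `|x c - y.1| != `|x c - y.2|) -> forall a, u s a <= u s' a.
Proof.
move=> hs hs' no_tie a0; rewrite leNgt; apply/negP => loss_a0.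
pose dist c := `|x c - loc y (s c)|.
case: (@arg_minP _ _ _ _ (fun c => u s' c < u s c) dist loss_a0) => a loss_a amin.
have [b [sb ba u'b ub]] := NE_loss_displacer hs hs' loss_a.
have [_ ua] := util_served (le_lt_trans (util_ge0 s' a) loss_a).
have ab : payoff a (s a) <= payoff b (s a).
  by rewrite lerD2l lerN2 (precedes_dist_le ba).
have pos_b : 0 < payoff b (s a).
  by rewrite (lt_le_trans _ ab) // -ua (le_lt_trans (util_ge0 s' a)).
have [_ ub_served] := util_served (lt_le_trans pos_b ub).
have loss_b : u s' b < u s b.
  rewrite u'b lt_neqAle ub andbT ub_served; apply: contra (no_tie b) => /eqP tie.
  apply/eqP; apply: (loc_dist_tie sb).
  by move: tie; rewrite /payoff => /addrI /oppr_inj.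
have := amin b loss_b; rewrite leNgt => /negP; apply.
rewrite /dist -ltrN2 -(ltrD2l 1) -/(payoff b (s b)) -/(payoff a (s a)).
by rewrite -ub_served (le_lt_trans ab) // -u'b.
Qed.

Lemma NE_util_le_colocated s s' : NE s -> NE s' -> y.1 = y.2 ->
  forall a, u s a <= u s' a.
Proof.
move=> hs hs' colocated a; rewrite leNgt; apply/negP => loss.
set t := y.1.
have locE j : loc y j = t by rewrite /loc -colocated; case: ifP.
have [ahead_a ua] := util_served (le_lt_trans (util_ge0 s' a) loss).
have pos_a : 0 < payoff a (s a) by rewrite -ua (le_lt_trans (util_ge0 s' a)).
pose P := [set l | precedes prio x t l a].
have card_P r : #|P| = (ahead r ord0 a + ahead r ord_max a)%N.
  rewrite -(cardsID [set l | r l == ord0] P); congr (_ + _)%N.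
    by apply: eq_card => l; rewrite !inE locE andbC.
  by apply: eq_card => l; rewrite !inE locE I2_neq0 andbC.
have served_P l : precedes prio x t l a -> (ahead s (s l) l < cap (s l))%N.
  move=> la; apply: (util_served _).1.
  have ahead_l : (ahead s (s a) l < cap (s a))%N.
    apply: leq_ltn_trans ahead_a; apply: subset_leq_card; apply/subsetP => p.
    by rewrite !inE locE => /andP[-> pl]; rewrite (precedes_trans pl la).
  apply: (lt_le_trans pos_a); apply: le_trans (@NE_deviation_le s l (s a) hs).
  by rewrite ahead_l lerD2l lerN2 !locE (precedes_dist_le la).
have within j : (ahead s j a <= cap j)%N.
  apply: card_admitted_le => l; rewrite inE locE => /andP[/eqP <- la].
  by split; last exact: served_P.
have full j : (cap j <= ahead s' j a)%N.
  apply: NE_full hs' _.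
  by rewrite /payoff locE -(locE (s a)) -/(payoff a (s a)) -ua.
have : (#|P| < #|P|)%N.
  rewrite {1}(card_P s) (card_P s'); apply: leq_trans (leq_add (full _) (full _)).
  case/orP: (orbN (s a == ord0)); rewrite ?I2_neq0 => /eqP sa;
    rewrite sa in ahead_a.
  - by rewrite -addSn leq_add.
  - by rewrite -addnS leq_add.
by rewrite ltnn.
Qed.

Lemma NE_util_le s s' : NE s -> NE s' ->
  (forall c, `|x c - y.1| = `|x c - y.2| -> y.1 = y.2) -> forall a, u s a <= u s' a.
Proof.
move=> hs hs' tie; have [colocated|apart] := eqVneq y.1 y.2.
  exact: NE_util_le_colocated.
apply: NE_util_le_no_tie => // c; apply: contra_neq apart; exact: tie.
Qed.

Lemma NE_SW_eq s s' : NE s -> NE s' ->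
  (forall c, `|x c - y.1| = `|x c - y.2| -> y.1 = y.2) ->
  SW k1 k2 prio x y s = SW k1 k2 prio x y s'.
Proof.
by move=> hs hs' tie; apply/le_anti; rewrite !ler_sum // => a _; apply: NE_util_le.
Qed.

End Game.

Lemma best_util_le (R : realFieldType) n k1 k2 (prio : {perm 'I_n})
    (x : 'I_n -> R) (y y' : R * R) s c :
  (forall j, 0 <= payoff x y c j) ->
  (forall j, `|x c - loc y j| <= `|x c - loc y' j|) ->
  (forall j l, precedes prio x (loc y j) l c -> precedes prio x (loc y' j) l c) ->
  best_util k1 k2 prio x y' s c <= best_util k1 k2 prio x y s c.
Proof.
move=> payoff_ge0 farther more_ahead.
suff util_le j :
    util k1 k2 prio x y' (upd s c j) c <= util k1 k2 prio x y (upd s c j) c.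
  by rewrite /best_util ge_max !le_max !util_le orbT.
rewrite !util_upd.
have ahead_le : (ahead prio x y s j c <= ahead prio x y' s j c)%N.
  apply: subset_leq_card; apply/subsetP => l; rewrite !inE => /andP[-> lc].
  exact: more_ahead.
case: ltnP => [free'|_]; last by case: ifP.
by rewrite (leq_ltn_trans ahead_le free') lerD2l lerN2.
Qed.

Lemma dist_away (R : realFieldType) (p t t' : R) :
  (p < t -> t <= t') -> (t < p -> t' <= t) -> `|p - t'| = `|p - t| + `|t - t'|.
Proof.
case: (ltgtP p t) => [pt /(_ isT) tt' _|tp _ /(_ isT) t't|<- _ _].
- have pt' : p <= t' by rewrite ltW // (lt_le_trans pt tt').
  rewrite [`|p - t'|]distrC [`|p - t|]distrC [`|t - t'|]distrC.
  by rewrite !ger0_norm ?subr_ge0 ?(ltW pt) //; lra.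
- have t'p : t' <= p by rewrite (le_trans t't) // ltW.
  by rewrite !ger0_norm ?subr_ge0 ?(ltW tp) //; lra.
- by rewrite subrr normr0 add0r.
Qed.

Lemma precedes_away (R : realFieldType) n (prio : {perm 'I_n}) (x : 'I_n -> R)
    (t t' : R) l c :
  (x c < t -> t <= t') -> (t < x c -> t' <= t) ->
  precedes prio x t l c -> precedes prio x t' l c.
Proof.
move=> away_r away_l; rewrite /precedes (dist_away away_r away_l).
have tri := ler_distD t (x l) t'.
case/orP => [closer|/andP[/eqP tie ->]].
  by rewrite (le_lt_trans tri) // ltrD2r.
by move: tri; rewrite tie andbT le_eqVlt orbC.
Qed.

Section SortedReports.
Variables (R : archiRealFieldType) (n : nat) (x : 'I_n -> R).
Local Notation z := (sorted_reports x).

Lemma size_sorted_reports : size z = n.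
Proof. by rewrite size_sort size_map size_enum_ord. Qed.

Lemma perm_sorted_reports : perm_eq z [seq x i | i <- enum 'I_n].
Proof. by rewrite perm_sort perm_refl. Qed.

Lemma count_sorted_reports (P : pred R) : count P z = #|[set l | P (x l)]|.
Proof.
rewrite (seq.permP perm_sorted_reports) count_map cardsE cardE /enum_mem.
by rewrite size_filter /= count_filter; apply: eq_count => l; rewrite /= andbT.
Qed.

Lemma sorted_reports_le k m : (k <= m)%N -> (m < n)%N -> z`_k <= z`_m.
Proof.
move=> km mn; apply: (le_sorted_leq_nth 0 (sort_le_sorted _)) => //.
  by rewrite inE size_sorted_reports (leq_ltn_trans km).
by rewrite inE size_sorted_reports.
Qed.

Lemma index_sorted_reports c : exists2 k, (k < n)%N & z`_k = x c.
Proof.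
have xc_in : x c \in z by rewrite (perm_mem perm_sorted_reports) map_f ?mem_enum.
exists (index (x c) z); last exact: nth_index.
by rewrite -[X in (_ < X)%N]size_sorted_reports index_mem.
Qed.

Lemma sorted_reports_in01 m : (forall l, in01 (x l)) -> in01 z`_m.
Proof.
move=> x01; have [nm|mn] := leqP n m.
  by rewrite nth_default ?size_sorted_reports // /in01 lexx ler01.
have : z`_m \in [seq x i | i <- enum 'I_n].
  by rewrite -(perm_mem perm_sorted_reports) mem_nth ?size_sorted_reports.
by case/mapP => l _ ->.
Qed.

Lemma card_lt_nth_sorted_reports (m : nat) : (#|[set l | (x l < z`_m)%R]| <= m)%N.
Proof.
rewrite -(count_sorted_reports (fun r => r < z`_m)); set t := z`_m.
rewrite -(cat_take_drop m z) count_cat.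
rewrite [count _ (drop m z)](_ : _ = 0%N) ?addn0.
  by rewrite (leq_trans (count_size _ _)) // size_take_min geq_minl.
apply/eqP; rewrite -leqn0 leqNgt -has_count; apply/(has_nthP 0) => -[k].
rewrite size_drop nth_drop size_sorted_reports => kn.
by rewrite ltNge sorted_reports_le ?leq_addr // -ltn_subRL.
Qed.

Lemma nth_sorted_reports_lt_card m : (m < n)%N ->
  (m < #|[set l | (x l <= z`_m)%R]|)%N.
Proof.
move=> mn; rewrite -(count_sorted_reports (fun r => r <= z`_m)); set t := z`_m.
rewrite -(cat_take_drop m.+1 z) count_cat.
have size_take_m : size (take m.+1 z) = m.+1 by rewrite size_takel ?size_sorted_reports.
rewrite [count _ (take _ _)](_ : _ = m.+1) ?leq_addr //.
rewrite -[RHS]size_take_m; apply/eqP; rewrite -all_count.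
apply/(all_nthP 0) => k; rewrite size_take_m => km.
by rewrite nth_take // sorted_reports_le.
Qed.

Lemma sorted_reports_adjacent_tie c m : (m.+1 < n)%N ->
  `|x c - z`_m| = `|x c - z`_m.+1| -> z`_m = z`_m.+1.
Proof.
move=> mn; have [k kn <-] := index_sorted_reports c.
have zm : z`_m <= z`_m.+1 by rewrite sorted_reports_le.
have [km|mk] := leqP k m.
- have zk : z`_k <= z`_m by rewrite sorted_reports_le // ltnW.
  rewrite distrC [`|_ - z`_m.+1|]distrC !ger0_norm ?subr_ge0 ?(le_trans zk) //.
  exact: addIr.
- have zk : z`_m.+1 <= z`_k by rewrite sorted_reports_le.
  rewrite !ger0_norm ?subr_ge0 ?(le_trans zm) // => /addrI.
  exact: oppr_inj.
Qed.

End SortedReports.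

Section Misreport.
Variables (R : archiRealFieldType) (n : nat) (x : 'I_n -> R) (c : 'I_n) (r : R).
Local Notation z := (sorted_reports x).
Local Notation z' := (sorted_reports (upd x c r)).

Lemma sorted_reports_upd_away m :
  (x c < z`_m -> z`_m <= z'`_m) /\ (z`_m < x c -> z'`_m <= z`_m).
Proof.
have [mn|nm] := ltnP m n; last by rewrite !nth_default ?size_sorted_reports.
have crowd (X Y : 'I_n -> R) : (m < n)%N ->
    (#|[set l | (X l <= (sorted_reports X)`_m)%R]| <=
     #|[set l | (Y l < (sorted_reports Y)`_m)%R]|)%N -> False.
  move=> {}mn; rewrite leqNgt => /negP; apply.
  exact: leq_ltn_trans (card_lt_nth_sorted_reports _ m)
                       (nth_sorted_reports_lt_card _ mn).
split=> [cz|zc]; rewrite leNgt; apply/negP => lt_z.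
- apply: (crowd (upd x c r) x mn); apply: subset_leq_card; apply/subsetP => l.
  rewrite !inE /upd; case: eqP => [->|_] le_z'; first exact: cz.
  exact: le_lt_trans le_z' lt_z.
- apply: (crowd x (upd x c r) mn); apply: subset_leq_card; apply/subsetP => l.
  rewrite !inE /upd; case: eqP => [->|_] le_z; last exact: le_lt_trans le_z lt_z.
  by move: (lt_le_trans zc le_z); rewrite ltxx.
Qed.

End Misreport.

Section Percentile.
Variables (R : archiRealFieldType) (n k1 k2 : nat) (prio : {perm 'I_n}) (v : R * R).

Lemma loc_PM (x : 'I_n -> R) j :
  loc (PM v x) j = (sorted_reports x)`_(pidx n (loc v j)).
Proof. by rewrite /loc; case: ifP. Qed.

Lemma PM_payoff_ge0 (x : 'I_n -> R) c j :
  (forall l, in01 (x l)) -> 0 <= payoff x (PM v x) c j.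
Proof.
move=> x01; rewrite /payoff loc_PM subr_ge0 ler_norml.
move: (x01 c) (sorted_reports_in01 (pidx n (loc v j)) x01) => /andP[? ?] /andP[? ?].
by apply/andP; split; lra.
Qed.

Lemma PM_absolutely_truthful : absolutely_truthful k1 k2 prio (PM v).
Proof.
move=> c x r s x01 _; apply: best_util_le => [j|j|j l]; first exact: PM_payoff_ge0.
all: rewrite !loc_PM.
all: have [away_r away_l] := sorted_reports_upd_away x c r (pidx n (loc v j)).
  by rewrite (dist_away away_r away_l) lerDl.
exact: precedes_away.
Qed.

End Percentile.

Theorem theorem7 (R : realType) (n k1 k2 : nat) (prio : {perm 'I_n})
    (v : R * R) (i : nat) :
  (k1 + k2 < n)%N ->
  in01 v.1 -> in01 v.2 ->
  (1 <= i <= n.-1)%N ->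
  Num.floor ((n.-1)%:R * v.1) = (i.-1)%:Z ->
  Num.floor ((n.-1)%:R * v.2) = i%:Z ->
  equilibrium_stable k1 k2 prio (PM v).
Proof.
case: i => // m _ _ _ /= m_lt floor1 floor2.
split; first exact: PM_absolutely_truthful.
move=> x x01 s s' hs hs'; apply: NE_SW_eq => // [c j|c]; first exact: PM_payoff_ge0.
rewrite /PM /pidx floor1 floor2 /=; apply: sorted_reports_adjacent_tie.
by rewrite -ltn_predRL.
Qed.
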